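(* Let $U$ be a compatible basis transform of $\mathbb{R}^{\{-1,1\}^n}$. Then $\deg_U(f)=\deg(f)$ for every $f\in\mathbb{R}^{\{-1,1\}^n}$.
   Context: $\mathbb{R}^{\{-1,1\}^n}$ is the real vector space of all functions $\{-1,1\}^n\to\mathbb{R}$; each $f$ has a unique expansion $f=\sum_{S\subseteq[n]}\hat f(S)\chi_S$, $\chi_S(x)=\prod_{i\in S}x_i$, and $\deg(f)=\max\{|S|:\hat f(S)\ne0\}$. A basis transform is an invertible linear map $U$ on $\mathbb{R}^{\{-1,1\}^n}$; the degree of $f$ under $U$ is $\deg_U(f):=\max\{\deg(U^{-1}(\chi_S)):\hat f(S)\ne0\}$. $U$ is compatible if $\deg(U(\chi_S))=|S|$ for every $S\subseteq[n]$. *)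

From HB Require Import structures.
From mathcomp Require Import all_boot all_order all_algebra.
Set Implicit Arguments. Unset Strict Implicit. Unset Printing Implicit Defensive.
Import Order.TTheory GRing.Theory Num.Theory.
Local Open Scope ring_scope.

(* Points of {-1,1}^n are encoded as boolean vectors b : {ffun 'I_n -> bool},
   with coordinate x_i = (-1)^(b i), i.e. true |-> -1, false |-> 1. *)
Notation cube n := {ffun 'I_n -> bool}.

Definition xcoord (R : numFieldType) n (x : cube n) (i : 'I_n) : R :=
  if x i then -1 else 1.

Notation bfun R n := {ffun cube n -> R}.

Definition chi (R : numFieldType) n (S : {set 'I_n}) : bfun R n :=
  [ffun x => \prod_(i in S) xcoord R x i].

(* Fourier coefficient hat f(S) = 2^{-n} sum_x f(x) chi_S(x); these are the
   (unique) coefficients of the expansion f = sum_S hat f(S) chi_S. *)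
Definition fcoef (R : numFieldType) n (f : bfun R n) (S : {set 'I_n}) : R :=
  (2 ^+ n)^-1 * \sum_(x : cube n) f x * chi R S x.

Definition fdeg (R : numFieldType) n (f : bfun R n) : nat :=
  \max_(S : {set 'I_n} | fcoef f S != 0) #|S|.

Definition fdegU (R : numFieldType) n (Uinv : bfun R n -> bfun R n)
  (f : bfun R n) : nat :=
  \max_(S : {set 'I_n} | fcoef f S != 0) fdeg (Uinv (chi R S)).

Definition compatible (R : numFieldType) n (U : bfun R n -> bfun R n) : Prop :=
  forall S : {set 'I_n}, fdeg (U (chi R S)) = #|S|.

Definition fscale (R : numFieldType) n (a : R) (f : bfun R n) : bfun R n :=
  [ffun x => a * f x].

From HB Require Import structures.
From mathcomp Require Import all_boot all_order all_algebra.
From mathcomp Require Import reals.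
From mathcomp Require Import ring.
Import GRing.Theory Num.Theory.
Local Open Scope ring_scope.

(* The characters chi_S are orthogonal, so the Fourier expansion shows that
   deg f <= d exactly when f lies in the span V_d of the chi_S with |S| <= d.
   Compatibility and linearity give U(V_d) <= V_d, and an injective linear map
   of the finite-dimensional V_d into itself is onto, so U^-1 preserves V_d
   too. Hence deg (U^-1 chi_S) <= |S|, and applying U, which cannot raise the
   degree either, gives back chi_S of degree |S|. *)

Section Fourier.
Variables (R : numFieldType) (n : nat).

Definition sgb (b : bool) : R := if b then -1 else 1.

Lemma sum_cube_prod (G : 'I_n -> bool -> R) :
  \sum_(x : cube n) \prod_i G i (x i) = \prod_i (G i true + G i false).
Proof.
rewrite -(bigA_distr_bigA G) /=.
by apply: eq_bigr => i _; rewrite big_bool.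
Qed.

Lemma prod_two_or_zero (P : pred 'I_n) :
  \prod_i (if P i then 2 else 0 : R) = if [forall i, P i] then 2 ^+ n else 0.
Proof.
case: ifP => [/forallP allP | /negbT/forallPn [i /negbTE Pi]].
  by rewrite -[in RHS](card_ord n) -prodr_const; apply: eq_bigr => i _; rewrite allP.
by rewrite (bigD1 i) //= Pi mul0r.
Qed.

Lemma chiE (S : {set 'I_n}) (x : cube n) :
  chi R S x = \prod_i (if i \in S then sgb (x i) else 1).
Proof. by rewrite ffunE -big_mkcond. Qed.

Lemma chi_orthogonal (S T : {set 'I_n}) :
  \sum_(x : cube n) chi R T x * chi R S x = if T == S then 2 ^+ n else 0.
Proof.
under eq_bigr => x _ do rewrite !chiE -big_split /=.
rewrite (sum_cube_prod (fun i b =>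
  (if i \in T then sgb b else 1) * (if i \in S then sgb b else 1))).
rewrite (eq_bigr (fun i => if (i \in T) == (i \in S) then 2 else 0)); last first.
  by move=> i _; case: (i \in T); case: (i \in S); rewrite /sgb /=; ring.
rewrite prod_two_or_zero; congr (if _ then _ else _).
apply/forallP/eqP => [eqTS | -> i //]; apply/setP => i; exact/eqP.
Qed.

Lemma chi_kernel (x y : cube n) :
  \sum_(S : {set 'I_n}) chi R S y * chi R S x = if y == x then 2 ^+ n else 0.
Proof.
transitivity
  (\sum_(S : {set 'I_n}) \prod_i (if i \in S then sgb (y i) * sgb (x i) else 1)).
  apply: eq_bigr => S _; rewrite !chiE -big_split /=; apply: eq_bigr => i _.
  by case: (i \in S); rewrite ?mulr1.
rewrite -(@bigA_distr _ _ 1 _ _ _ (fun i => sgb (y i) * sgb (x i)) (fun _ => 1)) /=.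
rewrite (eq_bigr (fun i => if y i == x i then 2 else 0)); last first.
  by move=> i _; case: (y i); case: (x i); rewrite /sgb /=; ring.
rewrite prod_two_or_zero; congr (if _ then _ else _).
apply/forallP/eqP => [eqyx | -> i //]; apply/ffunP => i; exact/eqP.
Qed.

Lemma two_expn_neq0 : (2 : R) ^+ n != 0.
Proof. by rewrite expf_neq0 // pnatr_eq0. Qed.

Lemma fcoef_chi (S T : {set 'I_n}) : fcoef (chi R T) S = (T == S)%:R.
Proof.
rewrite /fcoef chi_orthogonal; case: eqP => _; last by rewrite mulr0.
by rewrite mulVf // two_expn_neq0.
Qed.

(* R^o gives the function space the vectType structure needed for subspaces. *)
Notation W := {ffun cube n -> R^o}.

Lemma fcoefD (f g : W) S : fcoef (f + g) S = fcoef f S + fcoef g S.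
Proof.
rewrite /fcoef -mulrDr -big_split /=; congr (_ * _).
by apply: eq_bigr => x _; rewrite ffunE mulrDl.
Qed.

Lemma fcoefZ a (f : W) S : fcoef (a *: f) S = a * fcoef f S.
Proof.
rewrite /fcoef [RHS]mulrCA [in RHS]mulr_sumr; congr (_ * _).
by apply: eq_bigr => x _; rewrite ffunE mulrA.
Qed.

Lemma fcoef0 S : fcoef (0 : W) S = 0.
Proof. by rewrite -(scale0r (0 : W)) fcoefZ mul0r. Qed.

Lemma fcoef_sum (I : Type) (r : seq I) (P : pred I) (F : I -> W) S :
  fcoef (\sum_(i <- r | P i) F i) S = \sum_(i <- r | P i) fcoef (F i) S.
Proof.
exact: (big_morph (fun f : W => fcoef f S) (fun f g => fcoefD f g S) (fcoef0 S)).
Qed.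

Lemma fourier_expansion (f : bfun R n) x :
  f x = \sum_(S : {set 'I_n}) fcoef f S * chi R S x.
Proof.
under eq_bigr => S _ do rewrite /fcoef -mulrA mulr_suml.
rewrite -mulr_sumr exchange_big /=.
under eq_bigr => y _ do under eq_bigr => S _ do rewrite -mulrA.
under eq_bigr => y _ do rewrite -mulr_sumr chi_kernel.
rewrite (bigD1 x) //= eqxx big1 ?addr0 => [|y /negbTE ->]; last by rewrite mulr0.
by rewrite mulrCA mulVf ?mulr1 // two_expn_neq0.
Qed.

Lemma fdeg_leP (f : bfun R n) d :
  reflect (forall S, fcoef f S != 0 -> (#|S| <= d)%N) (fdeg f <= d)%N.
Proof. exact: bigmax_leqP. Qed.

Lemma fdeg_chi (S : {set 'I_n}) : fdeg (chi R S) = #|S|.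
Proof.
apply/eqP; rewrite eqn_leq; apply/andP; split.
  apply/fdeg_leP => T; rewrite fcoef_chi.
  by have [-> // | _] := eqVneq S T; rewrite eqxx.
by apply: (leq_bigmax_cond S); rewrite fcoef_chi eqxx oner_neq0.
Qed.

Definition lowdeg (d : nat) : {vspace W} :=
  <<[seq chi R A : W | A <- enum [set A : {set 'I_n} | (#|A| <= d)%N]]>>%VS.

Lemma mem_lowdeg d (f : W) : (f \in lowdeg d) = (fdeg f <= d)%N.
Proof.
apply/idP/idP => [/coord_span -> | /fdeg_leP deg_f].
  apply/fdeg_leP => S; rewrite fcoef_sum; apply: contraR; rewrite -ltnNge => ltdS.
  rewrite big1 // => i _; rewrite fcoefZ.
  set t := map_tuple _ _.
  have /mapP [T] : t`_i \in (t : seq W) by apply: mem_nth; rewrite size_tuple.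
  rewrite mem_enum inE => leTd ->; rewrite fcoef_chi.
  by case: eqP leTd => [-> | _]; rewrite ?mulr0 // leqNgt ltdS.
have -> : f = \sum_(S : {set 'I_n}) fcoef f S *: (chi R S : W).
  apply/ffunP => x; rewrite fourier_expansion sum_ffunE.
  by apply: eq_bigr => S _; rewrite [RHS]ffunE.
apply: memv_suml => S _.
have [-> | nz] := eqVneq (fcoef f S) 0; first by rewrite scale0r mem0v.
by apply/memvZ/memv_span/map_f; rewrite mem_enum inE deg_f.
Qed.

End Fourier.

Lemma limg_injective_stable (K : fieldType) (vT : vectType K) (f : 'End(vT))
    (V : {vspace vT}) :
  lker f == 0%VS -> (f @: V <= V)%VS -> (f @: V)%VS = V.
Proof.
move=> kerf0 fVV; apply/eqP; rewrite eqEdim fVV /=.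
by rewrite limg_dim_eq // (eqP kerf0) capv0.
Qed.

Section CompatibleTransform.
Variables (R : numFieldType) (n : nat) (U Uinv : bfun R n -> bfun R n).
Hypothesis U_lin :
  forall (a : R) (f g : bfun R n), U (fscale a f + g) = fscale a (U f) + U g.
Hypotheses (UK : cancel U Uinv) (UinvK : cancel Uinv U) (Ucomp : compatible U).

Notation W := {ffun cube n -> R^o}.

Definition Ufun : W -> W := U.

Lemma Ufun_linear : linear Ufun.
Proof.
have scaleE a (h : W) : fscale a h = a *: h by apply/ffunP => x; rewrite !ffunE.
by move=> a f g; rewrite /Ufun -!scaleE U_lin.
Qed.

HB.instance Definition _ := GRing.isLinear.Build R W W *:%R Ufun Ufun_linear.

Definition Uend : 'End(W) := linfun Ufun.

Lemma limg_U_lowdeg d : (Uend @: lowdeg R n d)%VS = lowdeg R n d.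
Proof.
apply: limg_injective_stable.
  by apply/lker0P => f g; rewrite !lfunE => /(can_inj UK).
rewrite limg_span; apply/span_subvP => _ /mapP [_ /mapP [S + ->] ->].
by rewrite mem_enum inE lfunE mem_lowdeg /= /Ufun Ucomp.
Qed.

Lemma fdeg_U_le (f : bfun R n) : (fdeg (U f) <= fdeg f)%N.
Proof.
have : f \in lowdeg R n (fdeg f) by rewrite mem_lowdeg.
by move/(memv_img Uend); rewrite limg_U_lowdeg lfunE mem_lowdeg.
Qed.

Lemma fdeg_Uinv_le (f : bfun R n) : (fdeg (Uinv f) <= fdeg f)%N.
Proof.
have : f \in (Uend @: lowdeg R n (fdeg f))%VS by rewrite limg_U_lowdeg mem_lowdeg.
case/memv_imgP => g g_low f_eq.
by rewrite {1}f_eq lfunE /Ufun UK -mem_lowdeg.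
Qed.

Lemma fdeg_Uinv_chi (S : {set 'I_n}) : fdeg (Uinv (chi R S)) = #|S|.
Proof.
have := fdeg_U_le (Uinv (chi R S)); have := fdeg_Uinv_le (chi R S).
by rewrite UinvK fdeg_chi => ub lb; apply/eqP; rewrite eqn_leq ub lb.
Qed.

End CompatibleTransform.

Theorem mainTheorem15 (R : realType) (n : nat)
  (U Uinv : bfun R n -> bfun R n)
  (U_lin : forall (a : R) (f g : bfun R n), U (fscale a f + g) = fscale a (U f) + U g)
  (UK : cancel U Uinv) (UinvK : cancel Uinv U)
  (Ucomp : compatible U) :
  forall f : bfun R n, fdegU Uinv f = fdeg f.
Proof.
by move=> f; apply: eq_bigr => S _; apply: fdeg_Uinv_chi.
Qed.
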